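(* Let $\gamma>0$, $N\in\mathbb{N}$, and $b_{-N},\dots,b_N\in\mathbb{C}$. Let $D=[d_{i,j}]_{i,j\ge0}$ be a compact operator on $\ell^2(\mathbb{Z}_+)$ (matrix in the standard basis) such that $d_{i,j}=0$ whenever $|i-j|>N$, and $$d_{m,m+j}=\frac{b_j}{(\log m)^{\gamma}}(1+o(1)),\qquad m\to+\infty,\ j=-N,\dots,N.$$ Let $\varphi_{1,b}(e^{i\theta})=\sum_{j=-N}^N b_je^{ij\theta}$. Then $$\lim_{n\to+\infty}(\log n)^{\gamma}s_n(D)=\|\varphi_{1,b}\|_{L^\infty(\mathbb{T})}.$$
   Context: $s_n(D)$, $n\ge1$, are the singular values of $D$ in non-increasing order with multiplicity. *)

From Stdlib Require Import Reals ZArith.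
From Coquelicot Require Import Coquelicot.
Open Scope R_scope.

Definition l2 (x : nat -> C) : Prop := ex_series (fun i => (Cmod (x i)) ^ 2).

Definition l2norm (x : nat -> C) : R := sqrt (Series (fun i => (Cmod (x i)) ^ 2)).

Definition vsub (x y : nat -> C) : nat -> C := fun i => Cminus (x i) (y i).

Definition ip (x y : nat -> C) : C :=
  (Series (fun i => Re (Cmult (x i) (Cconj (y i)))),
   Series (fun i => Im (Cmult (x i) (Cconj (y i))))).

Fixpoint csum (f : nat -> C) (r : nat) : C :=
  match r with
  | O => RtoC 0
  | S r' => Cplus (csum f r') (f r')
  end.

(* Action of a matrix d = [d_{i,j}] with d_{i,j} = 0 for |i-j| > N:
   (D x)_i = sum_{j <= i + N} d_{i,j} x_j  (all other terms vanish). *)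
Definition band_apply (N : nat) (d : nat -> nat -> C) (x : nat -> C) : nat -> C :=
  fun i => csum (fun j => Cmult (d i j) (x j)) (i + N + 1).

Definition bounded_op (T : (nat -> C) -> (nat -> C)) : Prop :=
  exists M : R, forall x, l2 x -> l2 (T x) /\ l2norm (T x) <= M * l2norm x.

Definition compact_op (T : (nat -> C) -> (nat -> C)) : Prop :=
  bounded_op T /\
  forall (xs : nat -> (nat -> C)) (B : R),
    (forall k, l2 (xs k) /\ l2norm (xs k) <= B) ->
    exists (phi : nat -> nat) (y : nat -> C),
      (forall k, (phi k < phi (S k))%nat) /\ l2 y /\
      is_lim_seq (fun k => l2norm (vsub (T (xs (phi k))) y)) 0.

Definition fin_rank_apply (r : nat) (u v : nat -> (nat -> C)) (x : nat -> C) : nat -> C :=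
  fun i => csum (fun k => Cmult (ip x (u k)) (v k i)) r.

(* n-th singular value (n >= 1), via the approximation-number formula
   s_n(T) = inf { ||T - K|| : rank K <= n - 1 }. *)
Definition sing_val (T : (nat -> C) -> (nat -> C)) (n : nat) : R :=
  real (Glb_Rbar (fun M : R => 0 <= M /\
    exists u v : nat -> (nat -> C),
      (forall k, (k < n - 1)%nat -> l2 (u k) /\ l2 (v k)) /\
      forall x, l2 x ->
        l2 (vsub (T x) (fin_rank_apply (n - 1) u v x)) /\
        l2norm (vsub (T x) (fin_rank_apply (n - 1) u v x)) <= M * l2norm x)).

Definition cexpi (t : R) : C := (cos t, sin t).

Definition symbol (N : nat) (b : Z -> C) (theta : R) : C :=
  csum (fun k => let j := (Z.of_nat k - Z.of_nat N)%Z in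
                 Cmult (b j) (cexpi (IZR j * theta))) (2 * N + 1).

(* L^infty(T) norm of the (continuous) symbol: sup over theta of |phi| *)
Definition symbol_sup_norm (N : nat) (b : Z -> C) : R :=
  real (Lub_Rbar (fun r : R => exists theta : R, r = Cmod (symbol N b theta))).

From Stdlib Require Import Reals ZArith Lia Lra Classical.
From Coquelicot Require Import Coquelicot.
Open Scope R_scope.

(* Write [w m = (ln m)^(-gamma)] and let [T] be the Toeplitz matrix of the symbol
   [phi(e^{i th}) = sum_j b_j e^{i j th}].  Far down, row [m] of [D] is [w m] times row [m] of
   [T] up to an error [o(w m)] in each of the [2N+1] band entries.

   Upper bound: deleting the first [m] rows is a rank [m] perturbation, and the remaining rows
   are [w i <= w m] times rows of [T] plus a small error.  Finite sections of [T] embed into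
   circulant matrices, which the discrete Fourier transform diagonalises with eigenvalues
   [phi(e^{2 pi i t / Q})]; hence [||T|| <= ||phi||_oo] and [s_(m+1)(D) <= (||phi||_oo + o(1)) w m].

   Lower bound: for any operator of rank [n - 1], some combination of [n] disjoint blocks of
   length [P], each carrying the plane wave [e^{i th k}] with [|phi(e^{i th})|] close to
   [||phi||_oo], lies in its kernel.  Away from the [2N] rows at the block edges [D] acts on such
   a vector as multiplication by about [w phi(e^{i th})], so that
   [s_n(D) >= (||phi||_oo - o(1)) (1 - 2N/P)^(1/2) w (s + n P)].

   Both bounds are sharp because [ln] varies slowly: [w (s + n P) / w n -> 1]. *)

(** * Finite sums *)

Fixpoint rsum (f : nat -> R) (n : nat) : R :=
  match n with
  | O => 0
  | S n' => rsum f n' + f n'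
  end.

Lemma rsum_S f n : rsum f (S n) = rsum f n + f n.
Proof. reflexivity. Qed.

Lemma rsum_ext f g n : (forall i, (i < n)%nat -> f i = g i) -> rsum f n = rsum g n.
Proof.
  induction n as [|n IH]; simpl; intros H; auto.
  rewrite IH by (intros; apply H; lia). rewrite H by lia; reflexivity.
Qed.

Lemma rsum_le f g n : (forall i, (i < n)%nat -> f i <= g i) -> rsum f n <= rsum g n.
Proof.
  induction n as [|n IH]; simpl; intros H; [lra|].
  pose proof (IH (fun i Hi => H i ltac:(lia))); pose proof (H n ltac:(lia)); lra.
Qed.

Lemma rsum_plus f g n : rsum (fun i => f i + g i) n = rsum f n + rsum g n.
Proof. induction n as [|n IH]; simpl; [lra|]. rewrite IH; lra. Qed.

Lemma rsum_scal c f n : rsum (fun i => c * f i) n = c * rsum f n.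
Proof. induction n as [|n IH]; simpl; [lra|]. rewrite IH; lra. Qed.

Lemma rsum_const c n : rsum (fun _ => c) n = INR n * c.
Proof. induction n as [|n IH]; simpl rsum; [simpl; lra|]. rewrite IH, S_INR; lra. Qed.

Lemma rsum_nonneg f n : (forall i, (i < n)%nat -> 0 <= f i) -> 0 <= rsum f n.
Proof.
  intros H. rewrite <- (Rmult_0_r (INR n)), <- rsum_const.
  apply rsum_le; auto.
Qed.

Lemma rsum_add f a b : rsum f (a + b) = rsum f a + rsum (fun i => f (a + i)%nat) b.
Proof.
  induction b as [|b IH]; simpl.
  - rewrite Nat.add_0_r; lra.
  - rewrite Nat.add_succ_r; simpl; rewrite IH; lra.
Qed.

Lemma rsum_mono f a b : (forall i, 0 <= f i) -> (a <= b)%nat -> rsum f a <= rsum f b.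
Proof.
  intros H Hab. replace b with (a + (b - a))%nat by lia. rewrite rsum_add.
  pose proof (rsum_nonneg (fun i => f (a + i)%nat) (b - a) (fun i _ => H _)); lra.
Qed.

Lemma rsum_ge_term f n i : (forall j, 0 <= f j) -> (i < n)%nat -> f i <= rsum f n.
Proof.
  intros H Hi. eapply Rle_trans; [|apply (rsum_mono f (S i) n H Hi)].
  simpl; pose proof (rsum_nonneg f i (fun j _ => H j)); lra.
Qed.

Lemma rsum_shift_le f t R : (forall i, 0 <= f i) ->
  rsum (fun j => f (t + j)%nat) R <= rsum f (t + R).
Proof.
  intros H. rewrite rsum_add.
  pose proof (rsum_nonneg f t (fun i _ => H i)). lra.
Qed.

Lemma rsum_skip_initial g m R :
  rsum (fun i => if (i <? m)%nat then 0 else g i) R = rsum (fun j => g (m + j)%nat) (R - m).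
Proof.
  destruct (Nat.le_gt_cases R m) as [HR|HR].
  - replace (R - m)%nat with 0%nat by lia. simpl.
    rewrite (rsum_ext _ (fun _ => 0)), rsum_const; [lra|].
    intros i Hi. rewrite (proj2 (Nat.ltb_lt i m)) by lia. reflexivity.
  - replace R with (m + (R - m))%nat at 1 by lia.
    rewrite rsum_add, (rsum_ext _ (fun _ => 0)), rsum_const.
    + rewrite Rmult_0_r, Rplus_0_l. apply rsum_ext. intros j _.
      rewrite (proj2 (Nat.ltb_ge (m + j) m)) by lia. reflexivity.
    + intros i Hi. rewrite (proj2 (Nat.ltb_lt i m)) by lia. reflexivity.
Qed.

Lemma rsum_swap (f : nat -> nat -> R) n m :
  rsum (fun i => rsum (fun j => f i j) m) n = rsum (fun j => rsum (fun i => f i j) n) m.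
Proof.
  induction n as [|n IH]; simpl.
  - rewrite rsum_const; lra.
  - rewrite IH, <- rsum_plus; reflexivity.
Qed.

Lemma rsum_block f n P : rsum f (n * P) = rsum (fun l => rsum (fun r => f (l * P + r)%nat) P) n.
Proof.
  induction n as [|n IH]; simpl; auto.
  rewrite <- IH, Nat.add_comm; apply rsum_add.
Qed.

Lemma rsum_sum_n f n : rsum f (S n) = sum_n f n.
Proof.
  induction n as [|n IH].
  - simpl; rewrite sum_O; lra.
  - rewrite sum_Sn, <- IH; reflexivity.
Qed.

Lemma cauchy_schwarz_rsum a K : rsum a K ^ 2 <= INR K * rsum (fun q => a q ^ 2) K.
Proof.
  induction K as [|K IH]; [simpl; lra|].
  rewrite !rsum_S, S_INR.
  set (S := rsum a K) in *; set (T := rsum (fun q => a q ^ 2) K) in *; set (x := a K).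
  assert (Hk := pos_INR K).
  assert (HT : 0 <= T) by (apply rsum_nonneg; intros; apply pow2_ge_0).
  assert (Hcross : 2 * S * x <= T + INR K * x ^ 2).
  { destruct (Req_dec (INR K) 0) as [E|E].
    - rewrite E in IH |- *.
      assert (S = 0) by (apply Rsqr_0_uniq; unfold Rsqr; simpl in IH; nra).
      subst; nra.
    - apply (Rmult_le_reg_l (INR K)); [lra|].
      assert (0 <= (S - INR K * x) ^ 2) by apply pow2_ge_0. nra. }
  replace ((S + x) ^ 2) with (S ^ 2 + 2 * S * x + x ^ 2) by ring.
  replace ((INR K + 1) * (T + x ^ 2)) with (INR K * T + (T + INR K * x ^ 2) + x ^ 2) by ring.
  lra.
Qed.

Lemma csum_ext f g n : (forall i, (i < n)%nat -> f i = g i) -> csum f n = csum g n.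
Proof.
  induction n as [|n IH]; simpl; intros H; auto.
  rewrite IH by (intros; apply H; lia). rewrite H by lia; reflexivity.
Qed.

Lemma csum_plus f g n : csum (fun i => Cplus (f i) (g i)) n = Cplus (csum f n) (csum g n).
Proof.
  induction n as [|n IH]; simpl.
  - apply injective_projections; simpl; lra.
  - rewrite IH; ring.
Qed.

Lemma csum_scal_l c f n : csum (fun i => Cmult c (f i)) n = Cmult c (csum f n).
Proof.
  induction n as [|n IH]; simpl.
  - apply injective_projections; simpl; lra.
  - rewrite IH; ring.
Qed.

Lemma csum_scal_r c f n : csum (fun i => Cmult (f i) c) n = Cmult (csum f n) c.
Proof.
  induction n as [|n IH]; simpl.
  - apply injective_projections; simpl; lra.
  - rewrite IH; ring.
Qed.

Lemma csum_zero f n : (forall i, (i < n)%nat -> f i = RtoC 0) -> csum f n = RtoC 0.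
Proof.
  induction n as [|n IH]; simpl; intros H; auto.
  rewrite IH by (intros; apply H; lia). rewrite H by lia; ring.
Qed.

Lemma csum_add f a b : csum f (a + b) = Cplus (csum f a) (csum (fun i => f (a + i)%nat) b).
Proof.
  induction b as [|b IH]; simpl.
  - rewrite Nat.add_0_r; ring.
  - rewrite Nat.add_succ_r; simpl; rewrite IH; ring.
Qed.

Lemma csum_swap (f : nat -> nat -> C) n m :
  csum (fun i => csum (fun j => f i j) m) n = csum (fun j => csum (fun i => f i j) n) m.
Proof.
  induction n as [|n IH]; simpl.
  - symmetry; apply csum_zero; auto.
  - rewrite IH, <- csum_plus; reflexivity.
Qed.

Lemma csum_mult f g n m :
  Cmult (csum f n) (csum g m) = csum (fun i => csum (fun j => Cmult (f i) (g j)) m) n.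
Proof.
  rewrite <- csum_scal_r. apply csum_ext; intros.
  rewrite csum_scal_l; reflexivity.
Qed.

Lemma csum_block f n P : csum f (n * P) = csum (fun l => csum (fun r => f (l * P + r)%nat) P) n.
Proof.
  induction n as [|n IH]; simpl; auto.
  rewrite <- IH, Nat.add_comm; apply csum_add.
Qed.

Lemma csum_delta f n i : (i < n)%nat ->
  csum (fun k => if Nat.eq_dec k i then f k else RtoC 0) n = f i.
Proof.
  induction n as [|n IH]; intros Hi; [lia|]. simpl.
  destruct (Nat.eq_dec n i) as [->|Hne].
  - rewrite csum_zero; [ring|].
    intros k Hk; destruct (Nat.eq_dec k i); [lia|auto].
  - rewrite IH by lia; ring.
Qed.

Lemma csum_Re f n : Re (csum f n) = rsum (fun i => Re (f i)) n.
Proof. induction n as [|n IH]; simpl; auto. rewrite <- IH; auto. Qed.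

Lemma csum_Im f n : Im (csum f n) = rsum (fun i => Im (f i)) n.
Proof. induction n as [|n IH]; simpl; auto. rewrite <- IH; auto. Qed.

Lemma csum_conj f n : Cconj (csum f n) = csum (fun i => Cconj (f i)) n.
Proof.
  induction n as [|n IH]; simpl.
  - apply injective_projections; simpl; lra.
  - rewrite Cplus_conj, IH; auto.
Qed.

Lemma RtoC_rsum f n : RtoC (rsum f n) = csum (fun i => RtoC (f i)) n.
Proof.
  induction n as [|n IH]; simpl; auto.
  rewrite <- IH; apply injective_projections; simpl; lra.
Qed.

Lemma Cmod_csum f n : Cmod (csum f n) <= rsum (fun i => Cmod (f i)) n.
Proof.
  induction n as [|n IH]; simpl.
  - rewrite Cmod_0; lra.
  - eapply Rle_trans; [apply Cmod_triangle|lra].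
Qed.

(** * Complex exponentials and the discrete Fourier transform *)

Lemma C_ext (a b : C) : Re a = Re b -> Im a = Im b -> a = b.
Proof. intros; apply injective_projections; auto. Qed.

Lemma RtoC_inj x y : RtoC x = RtoC y -> x = y.
Proof. intros H; injection H; auto. Qed.

Lemma RtoC_Cmod_sqr w : RtoC (Cmod w ^ 2) = Cmult w (Cconj w).
Proof. rewrite Cmod2_conj; reflexivity. Qed.

Lemma Cconj_0 : Cconj (RtoC 0) = RtoC 0.
Proof. apply C_ext; simpl; lra. Qed.

Lemma Cmod_reverse_triangle a b : Cmod a - Cmod b <= Cmod (Cplus a b).
Proof.
  pose proof (Cmod_triangle (Cplus a b) (Copp b)) as H.
  rewrite Cmod_opp in H. replace (Cplus (Cplus a b) (Copp b)) with a in H by ring. lra.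
Qed.

Lemma sqr_plus_le (p q eta : R) : 0 < eta ->
  (p + q) ^ 2 <= (1 + eta) * p ^ 2 + (1 + / eta) * q ^ 2.
Proof.
  intros He.
  assert (H : 0 <= (eta * p - q) ^ 2 / eta) by (apply Rdiv_le_0_compat; [apply pow2_ge_0|lra]).
  replace ((eta * p - q) ^ 2 / eta) with (eta * p ^ 2 - 2 * p * q + / eta * q ^ 2) in H
    by (field; lra).
  nra.
Qed.

Lemma Cmod_plus_sqr_le a b eta : 0 < eta ->
  Cmod (Cplus a b) ^ 2 <= (1 + eta) * Cmod a ^ 2 + (1 + / eta) * Cmod b ^ 2.
Proof.
  intros He. eapply Rle_trans; [|apply sqr_plus_le; auto].
  pose proof (Cmod_triangle a b); pose proof (Cmod_ge_0 (Cplus a b)).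
  apply pow_incr; lra.
Qed.

Lemma cexpi_add a b : Cmult (cexpi a) (cexpi b) = cexpi (a + b).
Proof. unfold cexpi; apply C_ext; simpl; rewrite ?cos_plus, ?sin_plus; lra. Qed.

Lemma cexpi_conj a : Cconj (cexpi a) = cexpi (- a).
Proof. unfold cexpi; apply C_ext; simpl; rewrite ?cos_neg, ?sin_neg; lra. Qed.

Lemma Cmod_cexpi a : Cmod (cexpi a) = 1.
Proof.
  unfold cexpi, Cmod; simpl fst; simpl snd.
  pose proof (sin2_cos2 a) as H; unfold Rsqr in H.
  replace (cos a ^ 2 + sin a ^ 2) with 1 by (simpl; nra). apply sqrt_1.
Qed.

Lemma cexpi_0 : cexpi 0 = RtoC 1.
Proof. unfold cexpi; apply C_ext; simpl; rewrite ?cos_0, ?sin_0; lra. Qed.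

Lemma cexpi_period x k : cexpi (x + 2 * INR k * PI) = cexpi x.
Proof. unfold cexpi; rewrite cos_period, sin_period; auto. Qed.

Lemma cexpi_ne_1 a : 0 < a < 2 * PI -> cexpi a <> RtoC 1.
Proof.
  intros Ha E. assert (Hc : cos a = 1) by (injection E; auto).
  assert (0 < sin (a / 2)) by (apply sin_gt_0; lra).
  replace a with (2 * (a / 2)) in Hc by field. rewrite cos_2a_sin in Hc. nra.
Qed.

Lemma geometric_sum_cexpi a Q :
  Cmult (Cminus (cexpi a) (RtoC 1)) (csum (fun t => cexpi (INR t * a)) Q)
  = Cminus (cexpi (INR Q * a)) (RtoC 1).
Proof.
  induction Q as [|Q IH]; simpl csum.
  - simpl INR; rewrite Rmult_0_l, cexpi_0; apply C_ext; simpl; lra.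
  - rewrite Cmult_plus_distr_l, IH, S_INR.
    replace ((INR Q + 1) * a) with (a + INR Q * a) by ring.
    rewrite <- cexpi_add; ring.
Qed.

Definition dft_step (Q : nat) : R := 2 * PI / INR Q.

Lemma sum_roots_of_unity Q j : (0 < j < Q)%nat ->
  csum (fun t => cexpi (INR t * (INR j * dft_step Q))) Q = RtoC 0.
Proof.
  intros Hj. unfold dft_step.
  assert (HQ : 0 < INR Q) by (apply lt_0_INR; lia).
  assert (Hjr : 0 < INR j < INR Q) by (split; [apply (lt_INR 0)|apply lt_INR]; lia).
  set (a := INR j * (2 * PI / INR Q)).
  assert (Hne : Cminus (cexpi a) (RtoC 1) <> RtoC 0).
  { intros X. apply (cexpi_ne_1 a).
    - pose proof PI_RGT_0. unfold a. split.
      + apply Rmult_lt_0_compat; [lra|]. apply Rdiv_lt_0_compat; lra.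
      + apply (Rmult_lt_reg_r (INR Q / (2 * PI))); [apply Rdiv_lt_0_compat; lra|].
        field_simplify; lra.
    - replace (cexpi a) with (Cplus (Cminus (cexpi a) (RtoC 1)) (RtoC 1)) by ring.
      rewrite X; ring. }
  assert (Hfull : cexpi (INR Q * a) = RtoC 1).
  { replace (INR Q * a) with (0 + 2 * INR j * PI) by (unfold a; field; lra).
    rewrite cexpi_period; apply cexpi_0. }
  pose proof (geometric_sum_cexpi a Q) as G. rewrite Hfull in G.
  rewrite <- (Cmult_1_l (csum _ Q)), <- (Cinv_l _ Hne), <- Cmult_assoc, G. ring.
Qed.

Lemma dft_orthogonality Q k k' : (k < Q)%nat -> (k' < Q)%nat ->
  csum (fun t => cexpi (INR t * ((INR k' - INR k) * dft_step Q))) Q =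
  if Nat.eq_dec k' k then RtoC (INR Q) else RtoC 0.
Proof.
  intros Hk Hk'. destruct (Nat.eq_dec k' k) as [->|Hne].
  - rewrite (csum_ext _ (fun _ => RtoC 1)).
    + rewrite <- (Rmult_1_r (INR Q)), <- rsum_const, RtoC_rsum; reflexivity.
    + intros t _. replace (INR t * ((INR k - INR k) * dft_step Q)) with 0 by ring.
      apply cexpi_0.
  - destruct (Nat.lt_ge_cases k k') as [Hlt|Hge].
    + rewrite <- minus_INR by lia. apply sum_roots_of_unity; lia.
    + rewrite <- (Cconj_conj (csum _ Q)), csum_conj.
      rewrite (csum_ext _ (fun t => cexpi (INR t * (INR (k - k') * dft_step Q)))).
      * rewrite sum_roots_of_unity by lia. apply Cconj_0.
      * intros t _. rewrite cexpi_conj, minus_INR by lia. f_equal; ring.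
Qed.

Definition dft (z : nat -> C) (Q t : nat) : C :=
  csum (fun k => Cmult (z k) (cexpi (- (INR k * (INR t * dft_step Q))))) Q.

Lemma parseval z Q :
  rsum (fun t => Cmod (dft z Q t) ^ 2) Q = INR Q * rsum (fun k => Cmod (z k) ^ 2) Q.
Proof.
  apply RtoC_inj. rewrite RtoC_rsum.
  rewrite (csum_ext _ (fun t => csum (fun k => csum (fun k' =>
      Cmult (Cmult (z k) (Cconj (z k'))) (cexpi (INR t * ((INR k' - INR k) * dft_step Q)))) Q) Q)).
  2:{ intros t _. rewrite RtoC_Cmod_sqr. unfold dft. rewrite csum_conj, csum_mult.
      apply csum_ext; intros k _; apply csum_ext; intros k' _.
      rewrite Cmult_conj, cexpi_conj, Ropp_involutive.
      transitivity (Cmult (Cmult (z k) (Cconj (z k')))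
        (Cmult (cexpi (- (INR k * (INR t * dft_step Q)))) (cexpi (INR k' * (INR t * dft_step Q))))).
      - ring.
      - rewrite cexpi_add. do 2 f_equal. ring. }
  rewrite csum_swap.
  rewrite (csum_ext _ (fun k => Cmult (Cmult (z k) (Cconj (z k))) (RtoC (INR Q)))).
  2:{ intros k Hk. rewrite csum_swap.
      rewrite (csum_ext _ (fun k' => if Nat.eq_dec k' k
                then Cmult (Cmult (z k) (Cconj (z k'))) (RtoC (INR Q)) else RtoC 0)).
      - apply (csum_delta (fun k' => Cmult (Cmult (z k) (Cconj (z k'))) (RtoC (INR Q)))); auto.
      - intros k' Hk'. rewrite csum_scal_l, dft_orthogonality by auto.
        destruct (Nat.eq_dec k' k); auto; ring. }
  rewrite csum_scal_r, RtoC_mult, RtoC_rsum.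
  rewrite (csum_ext (fun i => RtoC (Cmod (z i) ^ 2)) (fun k => Cmult (z k) (Cconj (z k))))
    by (intros; apply RtoC_Cmod_sqr).
  ring.
Qed.

Lemma csum_rotate_1 h Q : (0 < Q)%nat -> csum (fun i => h ((i + 1) mod Q)%nat) Q = csum h Q.
Proof.
  intros HQ. destruct Q as [|Q]; [lia|].
  transitivity (Cplus (csum (fun i => h ((i + 1) mod S Q)%nat) Q) (h ((Q + 1) mod S Q)%nat));
    [reflexivity|].
  rewrite Nat.add_1_r, Nat.Div0.mod_same.
  rewrite (csum_ext _ (fun i => h (1 + i)%nat)).
  - replace (S Q) with (1 + Q)%nat by lia. rewrite csum_add. simpl. ring.
  - intros i Hi. rewrite Nat.mod_small by lia. f_equal; lia.
Qed.

Lemma csum_rotate g Q q : (0 < Q)%nat -> csum (fun i => g ((i + q) mod Q)%nat) Q = csum g Q.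
Proof.
  intros HQ. induction q as [|q IH].
  - apply csum_ext; intros. rewrite Nat.add_0_r, Nat.mod_small; auto.
  - rewrite <- IH, <- (csum_rotate_1 (fun j => g ((j + q) mod Q)%nat)) by auto.
    apply csum_ext; intros i _. f_equal.
    rewrite Nat.Div0.add_mod_idemp_l. f_equal. lia.
Qed.

Definition trig_poly (beta : nat -> C) (K : nat) (th : R) : C :=
  csum (fun q => Cmult (beta q) (cexpi (INR q * th))) K.

Definition cyclic_correlation (beta : nat -> C) (K Q : nat) (z : nat -> C) (i : nat) : C :=
  csum (fun q => Cmult (beta q) (z ((i + q) mod Q)%nat)) K.

Lemma dft_cyclic_correlation beta K Q z t : (0 < Q)%nat ->
  dft (cyclic_correlation beta K Q z) Q t
  = Cmult (trig_poly beta K (INR t * dft_step Q)) (dft z Q t).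
Proof.
  intros HQ. unfold dft, cyclic_correlation, trig_poly.
  set (w := INR t * dft_step Q).
  assert (HQr : 0 < INR Q) by (apply lt_0_INR; lia).
  rewrite (csum_ext _ (fun i => csum (fun q =>
     Cmult (Cmult (beta q) (cexpi (INR q * w)))
       (Cmult (z ((i + q) mod Q)%nat) (cexpi (- (INR ((i + q) mod Q)%nat * w))))) K)).
  2:{ intros i _. rewrite <- csum_scal_r. apply csum_ext. intros q _.
      set (r := ((i + q) mod Q)%nat). set (m := ((i + q) / Q)%nat).
      assert (Hd : INR i + INR q = INR Q * INR m + INR r).
      { rewrite <- plus_INR, <- mult_INR, <- plus_INR. f_equal. apply Nat.div_mod. lia. }
      (* [(i + q - r) w] is a multiple of [2 PI] *)
      assert (E : cexpi (- (INR i * w)) = Cmult (cexpi (INR q * w)) (cexpi (- (INR r * w)))).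
      { rewrite cexpi_add, <- (cexpi_period (- (INR i * w)) (m * t)). f_equal.
        unfold w, dft_step. rewrite mult_INR.
        replace (INR r) with (INR i + INR q - INR Q * INR m) by lra. field. lra. }
      rewrite E. ring. }
  rewrite csum_swap, <- csum_scal_r. apply csum_ext. intros q _.
  rewrite csum_scal_l. f_equal.
  apply (csum_rotate (fun k => Cmult (z k) (cexpi (- (INR k * w))))); auto.
Qed.

Lemma cyclic_correlation_energy_le beta K Q z Phi : (0 < Q)%nat ->
  (forall th, Cmod (trig_poly beta K th) <= Phi) ->
  rsum (fun i => Cmod (cyclic_correlation beta K Q z i) ^ 2) Q
  <= Phi ^ 2 * rsum (fun k => Cmod (z k) ^ 2) Q.
Proof.
  intros HQ Hb. assert (HQr : 0 < INR Q) by (apply lt_0_INR; lia).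
  apply (Rmult_le_reg_l (INR Q)); auto.
  rewrite <- parseval.
  rewrite (rsum_ext _ (fun t => Cmod (trig_poly beta K (INR t * dft_step Q)) ^ 2
                                * Cmod (dft z Q t) ^ 2)).
  2:{ intros t _. rewrite dft_cyclic_correlation, Cmod_mult by auto. ring. }
  rewrite Rmult_comm, Rmult_assoc, (Rmult_comm _ (INR Q)), <- parseval, <- rsum_scal.
  apply rsum_le. intros t _. apply Rmult_le_compat_r; [apply pow2_ge_0|].
  apply pow_incr. split; [apply Cmod_ge_0|apply Hb].
Qed.

(** * Homogeneous linear systems *)

Lemma skip_index_onto k0 m k : (k0 < m)%nat -> (k < m)%nat -> k <> k0 ->
  exists k', (k' < m - 1)%nat /\ (if (k' <? k0)%nat then k' else S k') = k.
Proof.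
  intros Hk0 Hk Hne. destruct (Nat.lt_ge_cases k k0) as [Hlt|Hge].
  - exists k. rewrite (proj2 (Nat.ltb_lt k k0) Hlt). split; [lia|auto].
  - exists (k - 1)%nat. rewrite (proj2 (Nat.ltb_ge (k - 1) k0)) by lia. split; lia.
Qed.

Lemma homogeneous_system_nontrivial_solution n : forall m (A : nat -> nat -> C), (m < n)%nat ->
  exists v : nat -> C, (exists l, (l < n)%nat /\ v l <> RtoC 0) /\
    forall k, (k < m)%nat -> csum (fun l => Cmult (A k l) (v l)) n = RtoC 0.
Proof.
  induction n as [|n IH]; intros m A Hmn; [lia|].
  destruct (classic (exists k0, (k0 < m)%nat /\ A k0 n <> RtoC 0)) as [[k0 [Hk0 Hp]]|Hno].
  - (* eliminate the last unknown using the pivot row k0, then solve the other rows *)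
    set (p := A k0 n).
    set (row := fun k' => if (k' <? k0)%nat then k' else S k').
    set (B := fun k' l => Cminus (Cmult (A (row k') l) p) (Cmult (A k0 l) (A (row k') n))).
    destruct (IH (m - 1)%nat B ltac:(lia)) as [w [[l [Hl Hwl]] Hw]].
    set (S0 := csum (fun l => Cmult (A k0 l) (w l)) n).
    exists (fun l => if (l <? n)%nat then w l else Copp (Cdiv S0 p)). split.
    { exists l. rewrite (proj2 (Nat.ltb_lt l n) Hl). split; [lia|auto]. }
    intros k Hk. simpl csum. rewrite Nat.ltb_irrefl.
    rewrite (csum_ext _ (fun l => Cmult (A k l) (w l))).
    2:{ intros i Hi. rewrite (proj2 (Nat.ltb_lt i n) Hi). auto. }
    destruct (Nat.eq_dec k k0) as [->|Hne].
    + fold S0 p. field. auto.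
    + destruct (skip_index_onto k0 m k Hk0 Hk Hne) as [k' [Hk' Hrow]].
      specialize (Hw k' Hk'). cbv beta delta [B row] in Hw. rewrite Hrow in Hw.
      set (Sk := csum (fun l => Cmult (A k l) (w l)) n).
      assert (E : Cminus (Cmult p Sk) (Cmult (A k n) S0) = RtoC 0).
      { rewrite <- Hw.
        rewrite (csum_ext _ (fun l => Cplus (Cmult p (Cmult (A k l) (w l)))
                                            (Cmult (Copp (A k n)) (Cmult (A k0 l) (w l)))))
          by (intros; ring).
        rewrite csum_plus, !csum_scal_l. fold Sk S0. ring. }
      replace Sk with (Cdiv (Cplus (Cminus (Cmult p Sk) (Cmult (A k n) S0)) (Cmult (A k n) S0)) p)
        by (field; auto).
      rewrite E. field. auto.
  - exists (fun l => if Nat.eq_dec l n then RtoC 1 else RtoC 0). split.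
    + exists n. destruct (Nat.eq_dec n n); [|lia]. split; [lia|].
      intros X. injection X. lra.
    + intros k Hk. simpl csum. rewrite csum_zero.
      * destruct (Nat.eq_dec n n); [|lia].
        assert (A k n = RtoC 0) as -> by (apply NNPP; intros X; apply Hno; eauto).
        ring.
      * intros i Hi. destruct (Nat.eq_dec i n); [lia|]. ring.
Qed.

(** * Square-summable sequences and approximation numbers *)

Lemma is_series_finite_support f R0 : (forall i, (R0 <= i)%nat -> f i = 0) ->
  is_series f (rsum f R0).
Proof.
  intros H. apply (filterlim_ext_loc (fun _ => rsum f R0)); [|apply filterlim_const].
  exists R0. intros n Hn. rewrite <- rsum_sum_n.
  replace (S n) with (R0 + (S n - R0))%nat by lia.
  rewrite rsum_add, (rsum_ext (fun i => f (R0 + i)%nat) (fun _ => 0)), rsum_const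
    by (intros; apply H; lia).
  lra.
Qed.

Lemma Series_finite_support f R0 : (forall i, (R0 <= i)%nat -> f i = 0) ->
  ex_series f /\ Series f = rsum f R0.
Proof.
  intros H. split.
  - eexists; apply is_series_finite_support; eauto.
  - apply is_series_unique, is_series_finite_support; auto.
Qed.

Lemma rsum_le_Series f R0 : (forall i, 0 <= f i) -> ex_series f -> rsum f R0 <= Series f.
Proof.
  intros H [l Hl]. rewrite (is_series_unique _ _ Hl).
  assert (Hlim : is_lim_seq (sum_n f) l) by exact Hl.
  assert (Hle := is_lim_seq_le_loc (fun _ => rsum f R0) (sum_n f) _ _
                  ltac:(exists R0; intros n Hn; rewrite <- rsum_sum_n; apply rsum_mono; auto; lia)
                  (is_lim_seq_const _) Hlim).
  exact Hle.
Qed.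

Lemma Series_le_of_rsum_le f B : (forall i, 0 <= f i) -> (forall R0, rsum f R0 <= B) ->
  ex_series f /\ Series f <= B.
Proof.
  intros H HB.
  assert (E : ex_finite_lim_seq (sum_n f)).
  { apply (ex_finite_lim_seq_incr _ B); intros n; rewrite <- !rsum_sum_n; auto.
    rewrite (rsum_S f (S n)). specialize (H (S n)). lra. }
  destruct E as [l Hl]. split; [exists l; exact Hl|].
  rewrite (is_series_unique f l Hl).
  assert (Hle := is_lim_seq_le (sum_n f) (fun _ => B) l B
                  ltac:(intros n; rewrite <- rsum_sum_n; auto) Hl (is_lim_seq_const _)).
  exact Hle.
Qed.

Lemma l2_finite_support x R0 : (forall i, (R0 <= i)%nat -> x i = RtoC 0) ->
  l2 x /\ Series (fun i => Cmod (x i) ^ 2) = rsum (fun i => Cmod (x i) ^ 2) R0.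
Proof.
  intros H. apply Series_finite_support. intros i Hi.
  rewrite H, Cmod_0 by auto. ring.
Qed.

Lemma ip_finite_support x u R0 :
  (forall i, (R0 <= i)%nat -> Cmult (x i) (Cconj (u i)) = RtoC 0) ->
  ip x u = csum (fun i => Cmult (x i) (Cconj (u i))) R0.
Proof.
  intros H. unfold ip. apply C_ext; simpl; [rewrite csum_Re|rewrite csum_Im];
    apply Series_finite_support; intros i Hi; rewrite H by auto; reflexivity.
Qed.

Lemma l2norm_le_of_Series_le x y M : l2 x -> 0 <= M ->
  Series (fun i => Cmod (y i) ^ 2) <= M ^ 2 * Series (fun i => Cmod (x i) ^ 2) ->
  l2norm y <= M * l2norm x.
Proof.
  intros Hx HM H. unfold l2norm.
  assert (0 <= Series (fun i => Cmod (x i) ^ 2)).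
  { eapply Rle_trans; [|apply (rsum_le_Series _ 0)]; simpl; auto with real.
    intros; apply pow2_ge_0. }
  rewrite <- (sqrt_pow2 M) at 1 by auto. rewrite <- sqrt_mult by (auto; apply pow2_ge_0).
  apply sqrt_le_1_alt; auto.
Qed.

Lemma scaled_sqrt_le a b c : 0 <= c -> 0 <= a -> c ^ 2 * a <= b -> c * sqrt a <= sqrt b.
Proof.
  intros Hc Ha H. rewrite <- (sqrt_pow2 c) by auto.
  rewrite <- sqrt_mult by (auto; apply pow2_ge_0). apply sqrt_le_1_alt; auto.
Qed.

Lemma Glb_Rbar_nonneg (S : R -> Prop) : (forall M, S M -> 0 <= M) -> 0 <= real (Glb_Rbar S).
Proof.
  intros H0. destruct (Glb_Rbar_correct S) as [_ Hg].
  assert (A : Rbar_le 0 (Glb_Rbar S)) by (apply Hg; intros x Hx; apply H0; auto).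
  destruct (Glb_Rbar S); simpl in *; try contradiction; lra.
Qed.

Lemma Glb_Rbar_le (S : R -> Prop) M0 : (forall M, S M -> 0 <= M) -> S M0 ->
  real (Glb_Rbar S) <= M0.
Proof.
  intros H0 HM. destruct (Glb_Rbar_correct S) as [Hlb Hg].
  assert (A1 : Rbar_le (Glb_Rbar S) M0) by (apply Hlb; auto).
  assert (A2 : Rbar_le 0 (Glb_Rbar S)) by (apply Hg; intros x Hx; apply H0; auto).
  destruct (Glb_Rbar S); simpl in *; try contradiction; lra.
Qed.

Lemma Glb_Rbar_ge (S : R -> Prop) M0 c : S M0 -> (forall M, S M -> c <= M) ->
  c <= real (Glb_Rbar S).
Proof.
  intros HM H. destruct (Glb_Rbar_correct S) as [Hlb Hg].
  assert (A1 : Rbar_le (Glb_Rbar S) M0) by (apply Hlb; auto).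
  assert (A2 : Rbar_le c (Glb_Rbar S)) by (apply Hg; intros x Hx; apply H; auto).
  destruct (Glb_Rbar S); simpl in *; try contradiction; lra.
Qed.

Lemma Lub_Rbar_bounds (E : R -> Prop) B x0 : E x0 -> (forall r, E r -> r <= B) ->
  (forall r, E r -> r <= real (Lub_Rbar E)) /\
  (forall u, (forall r, E r -> r <= u) -> real (Lub_Rbar E) <= u).
Proof.
  intros Hx HB. destruct (Lub_Rbar_correct E) as [Hub Hl].
  assert (A1 : Rbar_le (Lub_Rbar E) B) by (apply Hl; intros r Hr; simpl; auto).
  assert (A2 : Rbar_le x0 (Lub_Rbar E)) by (apply Hub; auto).
  destruct (Lub_Rbar E) as [l| |]; simpl in *; try contradiction.
  split.
  - intros r Hr. apply (Hub r Hr).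
  - intros u Hu. apply (Hl (Finite u)). intros r' Hr'; simpl; auto.
Qed.

Lemma l2norm_ext x y : (forall i, x i = y i) -> l2norm x = l2norm y.
Proof. intros H. unfold l2norm. f_equal. apply Series_ext. intros; rewrite H; auto. Qed.

Lemma l2_ext x y : (forall i, x i = y i) -> l2 x -> l2 y.
Proof. intros H. apply ex_series_ext. intros; rewrite H; auto. Qed.

Lemma sing_val_nonneg T n : 0 <= sing_val T n.
Proof. apply Glb_Rbar_nonneg. intros M [HM _]; auto. Qed.

Lemma sing_val_le T n M (u v : nat -> (nat -> C)) : 0 <= M ->
  (forall k, (k < n - 1)%nat -> l2 (u k) /\ l2 (v k)) ->
  (forall x, l2 x ->
     l2 (vsub (T x) (fin_rank_apply (n - 1) u v x)) /\
     l2norm (vsub (T x) (fin_rank_apply (n - 1) u v x)) <= M * l2norm x) ->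
  sing_val T n <= M.
Proof.
  intros HM Huv Hx. apply Glb_Rbar_le.
  - intros M' [HM' _]; auto.
  - split; [auto|]. exists u, v; auto.
Qed.

Lemma sing_val_ge T n c : bounded_op T ->
  (forall u v : nat -> (nat -> C), (forall k, (k < n - 1)%nat -> l2 (u k) /\ l2 (v k)) ->
     exists x, l2 x /\ 0 < l2norm x /\
       (forall i, fin_rank_apply (n - 1) u v x i = RtoC 0) /\ c * l2norm x <= l2norm (T x)) ->
  c <= sing_val T n.
Proof.
  intros [Mb HMb] Htest.
  set (zero := fun (_ : nat) (_ : nat) => RtoC 0).
  assert (Hzero : forall x i, vsub (T x) (fin_rank_apply (n - 1) zero zero x) i = T x i).
  { intros x i. unfold vsub, fin_rank_apply, zero. rewrite csum_zero; [ring|intros; ring]. }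
  apply (Glb_Rbar_ge _ (Rmax Mb 0)).
  - split; [apply Rmax_r|]. exists zero, zero. split.
    + intros k _. split; apply (l2_finite_support _ 0); auto.
    + intros x Hx. destruct (HMb x Hx) as [H1 H2].
      rewrite (l2norm_ext _ _ (Hzero x)). split; [apply (l2_ext (T x)); auto|].
      eapply Rle_trans; [exact H2|]. apply Rmult_le_compat_r; [apply sqrt_pos|apply Rmax_l].
  - intros M [HM [u [w [Huw Hall]]]].
    destruct (Htest u w Huw) as [x [Hx [Hpos [HK Hc]]]].
    destruct (Hall x Hx) as [_ HM'].
    rewrite (l2norm_ext _ (T x)) in HM' by (intros i; unfold vsub; rewrite HK; ring).
    apply (Rmult_le_reg_r (l2norm x)); lra.
Qed.

(** * Banded matrices with logarithmically decaying diagonals *)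

Definition banded (N : nat) (d : nat -> nat -> C) : Prop :=
  forall i j : nat, (i + N < j)%nat \/ (j + N < i)%nat -> d i j = RtoC 0.

Lemma band_apply_window N d x i : banded N d -> (N <= i)%nat ->
  band_apply N d x i = csum (fun q => Cmult (d i (i - N + q)%nat) (x (i - N + q)%nat)) (2 * N + 1).
Proof.
  intros Hb Hi. unfold band_apply.
  replace (i + N + 1)%nat with ((i - N) + (2 * N + 1))%nat by lia.
  rewrite csum_add, csum_zero; [ring|].
  intros j Hj. rewrite Hb by lia. ring.
Qed.

(* Band offsets [j = -N .. N] are indexed by [q = j + N]. *)
Definition symbol_coef (N : nat) (b : Z -> C) (q : nat) : C := b (Z.of_nat q - Z.of_nat N)%Z.

Lemma Cmod_symbol N b th :
  Cmod (symbol N b th) = Cmod (trig_poly (symbol_coef N b) (2 * N + 1) th).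
Proof.
  unfold symbol, trig_poly.
  rewrite (csum_ext _ (fun k => Cmult (Cmult (symbol_coef N b k) (cexpi (INR k * th)))
                                      (cexpi (- (INR N * th))))).
  - rewrite csum_scal_r, Cmod_mult, Cmod_cexpi. ring.
  - intros k _. unfold symbol_coef. rewrite <- Cmult_assoc, cexpi_add. do 2 f_equal.
    rewrite minus_IZR, <- !INR_IZR_INZ. ring.
Qed.

Lemma Cmod_trig_poly_le beta K th : Cmod (trig_poly beta K th) <= rsum (fun q => Cmod (beta q)) K.
Proof.
  eapply Rle_trans; [apply Cmod_csum|]. apply rsum_le. intros.
  rewrite Cmod_mult, Cmod_cexpi. lra.
Qed.

Lemma symbol_sup_norm_spec N b :
  (forall th, Cmod (trig_poly (symbol_coef N b) (2 * N + 1) th) <= symbol_sup_norm N b) /\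
  (forall e, 0 < e -> exists th,
     symbol_sup_norm N b - e < Cmod (trig_poly (symbol_coef N b) (2 * N + 1) th)).
Proof.
  set (E := fun r : R => exists theta : R, r = Cmod (symbol N b theta)).
  destruct (Lub_Rbar_bounds E (rsum (fun q => Cmod (symbol_coef N b q)) (2 * N + 1))
              (Cmod (symbol N b 0))) as [Hub Hleast].
  - exists 0; auto.
  - intros r [th ->]. rewrite Cmod_symbol. apply Cmod_trig_poly_le.
  - unfold symbol_sup_norm. fold E. split.
    + intros th. rewrite <- Cmod_symbol. apply Hub. exists th; auto.
    + intros e He. apply NNPP. intros Hno.
      assert (real (Lub_Rbar E) <= real (Lub_Rbar E) - e); [|lra].
      apply Hleast. intros r [th ->]. rewrite Cmod_symbol.
      apply Rnot_lt_le. intros Y. apply Hno. eauto.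
Qed.

Definition log_weight (gamma : R) (m : nat) : R := / Rpower (ln (INR m)) gamma.

Lemma log_weight_pos gamma m : 0 < log_weight gamma m.
Proof. apply Rinv_0_lt_compat, exp_pos. Qed.

Lemma Rpower_ln_log_weight gamma n : Rpower (ln (INR n)) gamma * log_weight gamma n = 1.
Proof. unfold log_weight. field. apply Rgt_not_eq, exp_pos. Qed.

Lemma log_weight_antitone gamma m i : 0 <= gamma -> (2 <= m)%nat -> (m <= i)%nat ->
  log_weight gamma i <= log_weight gamma m.
Proof.
  intros Hg Hm Hi. apply Rinv_le_contravar; [apply exp_pos|].
  apply Rle_Rpower_l; auto. split.
  - rewrite <- ln_1. apply ln_increasing; [lra|]. apply (lt_INR 1 m); lia.
  - apply ln_le; [apply (lt_INR 0 m); lia|]. apply le_INR; auto.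
Qed.

Definition diag_asymptotics (gamma : R) (N : nat) (b : Z -> C) (d : nat -> nat -> C) : Prop :=
  forall j : Z, (- Z.of_nat N <= j <= Z.of_nat N)%Z ->
     exists eps : nat -> C,
       is_lim_seq (fun m => Cmod (eps m)) 0 /\
       exists m0 : nat, forall m : nat, (m0 <= m)%nat ->
         d m (Z.to_nat (Z.of_nat m + j)) =
         Cmult (Cdiv (b j) (RtoC (Rpower (ln (INR m)) gamma))) (Cplus (RtoC 1) (eps m)).

Definition row_close (gamma : R) (N : nat) (b : Z -> C) (d : nat -> nat -> C) (delta : R)
    (i : nat) : Prop :=
  forall q, (q <= 2 * N)%nat ->
    Cmod (Cminus (d i (i - N + q)%nat) (Cmult (symbol_coef N b q) (RtoC (log_weight gamma i))))
    <= delta * log_weight gamma i.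

Lemma eventually_forall_le K (P : nat -> nat -> Prop) :
  (forall q, (q <= K)%nat -> eventually (P q)) ->
  eventually (fun m => forall q, (q <= K)%nat -> P q m).
Proof.
  induction K as [|K IH]; intros H.
  - destruct (H 0%nat (le_n 0)) as [M HM]. exists M. intros m Hm q Hq.
    replace q with 0%nat by lia. auto.
  - destruct (IH (fun q Hq => H q ltac:(lia))) as [M1 HM1].
    destruct (H (S K) (le_n _)) as [M2 HM2].
    exists (Nat.max M1 M2). intros m Hm q Hq.
    destruct (Nat.eq_dec q (S K)) as [->|Hne]; [apply HM2|apply HM1]; lia.
Qed.

Lemma row_close_eventually gamma N b d delta : diag_asymptotics gamma N b d -> 0 < delta ->
  eventually (row_close gamma N b d delta).
Proof.
  intros H Hdel. apply eventually_forall_le. intros q Hq.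
  destruct (H (Z.of_nat q - Z.of_nat N)%Z ltac:(lia)) as [eps [Heps [m0 Hm0]]].
  set (bq := symbol_coef N b q).
  assert (Hb0 : 0 < Cmod bq + 1) by (pose proof (Cmod_ge_0 bq); lra).
  apply is_lim_seq_spec in Heps.
  destruct (Heps (mkposreal (delta / (Cmod bq + 1)) ltac:(apply Rdiv_lt_0_compat; lra)))
    as [M1 HM1].
  exists (Nat.max (Nat.max m0 M1) N). intros m Hm.
  specialize (HM1 m ltac:(lia)). simpl in HM1.
  rewrite Rminus_0_r, Rabs_pos_eq in HM1 by apply Cmod_ge_0.
  specialize (Hm0 m ltac:(lia)).
  replace (Z.to_nat (Z.of_nat m + (Z.of_nat q - Z.of_nat N))) with (m - N + q)%nat in Hm0 by lia.
  change (b (Z.of_nat q - Z.of_nat N)%Z) with bq in Hm0. rewrite Hm0.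
  assert (Hw := log_weight_pos gamma m).
  replace (Cminus _ _) with (Cmult (Cmult bq (RtoC (log_weight gamma m))) (eps m)).
  2:{ unfold log_weight. assert (Hp := exp_pos (gamma * ln (ln (INR m)))).
      rewrite RtoC_inv by (unfold Rpower; lra). field.
      intros X. injection X. unfold Rpower. lra. }
  rewrite !Cmod_mult, Cmod_R, Rabs_pos_eq by lra.
  assert (Cmod bq * Cmod (eps m) <= delta).
  { apply Rle_trans with ((Cmod bq + 1) * (delta / (Cmod bq + 1))); [|right; field; lra].
    pose proof (Cmod_ge_0 bq). pose proof (Cmod_ge_0 (eps m)).
    apply Rle_trans with (Cmod bq * (delta / (Cmod bq + 1))); [apply Rmult_le_compat_l; lra|].
    apply Rmult_le_compat_r; [apply Rlt_le, Rdiv_lt_0_compat|]; lra. }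
  pose proof (Cmod_ge_0 bq). nra.
Qed.

(** * Upper bound: discarding the first rows *)

Definition toeplitz_row (beta : nat -> C) (K : nat) (x : nat -> C) (j : nat) : C :=
  csum (fun q => Cmult (beta q) (x (j + q)%nat)) K.

Definition window_energy (K : nat) (x : nat -> C) (j : nat) : R :=
  rsum (fun q => Cmod (x (j + q)%nat) ^ 2) K.

Lemma toeplitz_energy_le beta K Phi x t R :
  (forall th, Cmod (trig_poly beta K th) <= Phi) ->
  rsum (fun j => Cmod (toeplitz_row beta K x (t + j)) ^ 2) R
  <= Phi ^ 2 * rsum (fun k => Cmod (x k) ^ 2) (t + R + K).
Proof.
  intros HPhi. destruct R as [|R].
  { simpl. apply Rmult_le_pos; [apply pow2_ge_0|]. apply rsum_nonneg; intros; apply pow2_ge_0. }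
  set (Q := (t + S R + K)%nat).
  (* the rows t, ..., t + R of the Toeplitz matrix are rows of the Q-periodic circulant *)
  apply Rle_trans with (rsum (fun i => Cmod (cyclic_correlation beta K Q x i) ^ 2) Q).
  - eapply Rle_trans; [|apply (rsum_mono _ (t + S R)); [intros; apply pow2_ge_0|lia]].
    rewrite (rsum_ext _ (fun j => Cmod (cyclic_correlation beta K Q x (t + j)) ^ 2)).
    + apply (rsum_shift_le (fun i => Cmod (cyclic_correlation beta K Q x i) ^ 2)).
      intros; apply pow2_ge_0.
    + intros j Hj. unfold toeplitz_row, cyclic_correlation. do 2 f_equal.
      apply csum_ext. intros q Hq. rewrite Nat.mod_small by lia. reflexivity.
  - apply cyclic_correlation_energy_le; auto. lia.
Qed.

Lemma window_energy_le K x t R :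
  rsum (fun j => window_energy K x (t + j)) R <= INR K * rsum (fun k => Cmod (x k) ^ 2) (t + R + K).
Proof.
  unfold window_energy. rewrite rsum_swap, <- rsum_const.
  apply rsum_le. intros q Hq.
  eapply Rle_trans; [|apply (rsum_mono _ (t + q + R)); [intros; apply pow2_ge_0|lia]].
  rewrite (rsum_ext _ (fun j => Cmod (x (t + q + j)%nat) ^ 2)) by (intros; do 3 f_equal; lia).
  apply (rsum_shift_le (fun k => Cmod (x k) ^ 2)). intros; apply pow2_ge_0.
Qed.

Section UpperBound.

Variables (gamma : R) (N : nat) (b : Z -> C) (d : nat -> nat -> C).
Hypothesis (Hgamma : 0 <= gamma) (Hband : banded N d).

Let K := (2 * N + 1)%nat.
Let beta := symbol_coef N b.

Lemma row_energy_le eta delta w x i : 0 < eta -> 0 <= delta -> (N <= i)%nat ->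
  row_close gamma N b d delta i -> log_weight gamma i <= w ->
  Cmod (band_apply N d x i) ^ 2
  <= (1 + eta) * w ^ 2 * Cmod (toeplitz_row beta K x (i - N)) ^ 2
     + (1 + / eta) * INR K * delta ^ 2 * w ^ 2 * window_energy K x (i - N).
Proof.
  intros Heta Hdel Hi Hclose Hw.
  set (wi := log_weight gamma i) in *.
  assert (Hwi : 0 < wi) by apply log_weight_pos.
  set (T := toeplitz_row beta K x (i - N)).
  set (E := csum (fun q => Cmult (Cminus (d i (i - N + q)%nat) (Cmult (beta q) (RtoC wi)))
                                 (x (i - N + q)%nat)) K).
  assert (Hsplit : band_apply N d x i = Cplus (Cmult (RtoC wi) T) E).
  { rewrite band_apply_window by auto. unfold E, T, toeplitz_row.
    rewrite <- csum_scal_l, <- csum_plus. apply csum_ext. intros; ring. }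
  assert (HE : Cmod E <= delta * wi * rsum (fun q => Cmod (x (i - N + q)%nat)) K).
  { eapply Rle_trans; [apply Cmod_csum|]. rewrite <- rsum_scal. apply rsum_le. intros q Hq.
    rewrite Cmod_mult. apply Rmult_le_compat_r; [apply Cmod_ge_0|].
    apply Hclose. unfold K in Hq; lia. }
  assert (HE2 : Cmod E ^ 2 <= (delta * w) ^ 2 * (INR K * window_energy K x (i - N))).
  { apply Rle_trans with ((delta * wi * rsum (fun q => Cmod (x (i - N + q)%nat)) K) ^ 2).
    - apply pow_incr. split; [apply Cmod_ge_0|exact HE].
    - rewrite !Rpow_mult_distr. apply Rmult_le_compat.
      + apply Rmult_le_pos; apply pow2_ge_0.
      + apply pow2_ge_0.
      + apply Rmult_le_compat_l; [apply pow2_ge_0|]. apply pow_incr; lra.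
      + apply cauchy_schwarz_rsum. }
  rewrite Hsplit. eapply Rle_trans; [apply (Cmod_plus_sqr_le _ _ eta Heta)|].
  assert (0 < 1 + / eta) by (pose proof (Rinv_0_lt_compat eta Heta); lra).
  apply Rplus_le_compat.
  - rewrite Cmod_mult, Cmod_R, Rabs_pos_eq, Rpow_mult_distr, Rmult_assoc by lra.
    apply Rmult_le_compat_l; [lra|]. apply Rmult_le_compat_r; [apply pow2_ge_0|].
    apply pow_incr; lra.
  - replace ((1 + / eta) * INR K * delta ^ 2 * w ^ 2 * window_energy K x (i - N))
      with ((1 + / eta) * ((delta * w) ^ 2 * (INR K * window_energy K x (i - N)))) by ring.
    apply Rmult_le_compat_l; lra.
Qed.

Lemma tail_energy_le Phi eta delta m x R :
  (forall th, Cmod (trig_poly beta K th) <= Phi) -> 0 < eta -> 0 <= delta ->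
  (N <= m)%nat -> (2 <= m)%nat -> (forall i, (m <= i)%nat -> row_close gamma N b d delta i) ->
  rsum (fun j => Cmod (band_apply N d x (m + j)) ^ 2) R
  <= log_weight gamma m ^ 2 * ((1 + eta) * Phi ^ 2 + (1 + / eta) * INR K ^ 2 * delta ^ 2)
     * rsum (fun k => Cmod (x k) ^ 2) (m + R + N + 1).
Proof.
  intros HPhi Heta Hdel HNm H2m Hclose.
  set (wm := log_weight gamma m).
  set (X := rsum (fun k => Cmod (x k) ^ 2) (m + R + N + 1)).
  assert (Hinv : 0 < 1 + / eta) by (pose proof (Rinv_0_lt_compat eta Heta); lra).
  assert (HK : 0 <= INR K) by apply pos_INR.
  assert (Hlen : (m - N + R + K = m + R + N + 1)%nat) by (unfold K; lia).
  eapply Rle_trans.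
  { apply rsum_le. intros j _.
    apply (row_energy_le eta delta wm x (m + j)); auto; [lia|apply Hclose; lia|].
    apply log_weight_antitone; auto; lia. }
  rewrite rsum_plus, !rsum_scal.
  rewrite (rsum_ext (fun j => Cmod (toeplitz_row beta K x (m + j - N)) ^ 2)
                    (fun j => Cmod (toeplitz_row beta K x (m - N + j)) ^ 2))
    by (intros; do 3 f_equal; lia).
  rewrite (rsum_ext (fun j => window_energy K x (m + j - N))
                    (fun j => window_energy K x (m - N + j)))
    by (intros; f_equal; lia).
  pose proof (toeplitz_energy_le beta K Phi x (m - N) R HPhi) as HT.
  pose proof (window_energy_le K x (m - N) R) as HW.
  rewrite Hlen in HT, HW. fold X in HT, HW.
  assert (0 <= wm ^ 2) by apply pow2_ge_0.
  apply Rle_trans with ((1 + eta) * wm ^ 2 * (Phi ^ 2 * X)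
                        + (1 + / eta) * INR K * delta ^ 2 * wm ^ 2 * (INR K * X)).
  - apply Rplus_le_compat; apply Rmult_le_compat_l; auto.
    + apply Rmult_le_pos; lra.
    + assert (0 <= delta ^ 2) by apply pow2_ge_0.
      apply Rmult_le_pos; [|auto]. apply Rmult_le_pos; [|auto]. apply Rmult_le_pos; lra.
  - right. ring.
Qed.

Definition unit_vec (k i : nat) : C := if Nat.eq_dec i k then RtoC 1 else RtoC 0.

Lemma fin_rank_first_rows m x i :
  fin_rank_apply m (fun k j => Cconj (d k j)) unit_vec x i
  = if (i <? m)%nat then band_apply N d x i else RtoC 0.
Proof.
  unfold fin_rank_apply, unit_vec. destruct (i <? m)%nat eqn:E.
  - apply Nat.ltb_lt in E.
    rewrite (csum_ext _ (fun k => if Nat.eq_dec k i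
                                  then ip x (fun j => Cconj (d k j)) else RtoC 0)).
    + rewrite (csum_delta (fun k => ip x (fun j => Cconj (d k j)))) by auto.
      rewrite (ip_finite_support _ _ (i + N + 1)).
      * apply csum_ext. intros j _. rewrite Cconj_conj. ring.
      * intros j Hj. rewrite Hband by lia. rewrite !Cconj_0. ring.
    + intros k Hk. destruct (Nat.eq_dec i k), (Nat.eq_dec k i); subst; try lia; ring.
  - apply Nat.ltb_ge in E. apply csum_zero. intros k Hk.
    destruct (Nat.eq_dec i k); [lia|ring].
Qed.

Lemma sing_val_upper Phi eta delta A m :
  bounded_op (band_apply N d) -> (forall th, Cmod (trig_poly beta K th) <= Phi) ->
  0 < eta -> 0 <= delta -> (N <= m)%nat -> (2 <= m)%nat ->
  (forall i, (m <= i)%nat -> row_close gamma N b d delta i) ->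
  0 <= A -> (1 + eta) * Phi ^ 2 + (1 + / eta) * INR K ^ 2 * delta ^ 2 <= A ^ 2 ->
  sing_val (band_apply N d) (S m) <= log_weight gamma m * A.
Proof.
  intros [Mb HMb] HPhi Heta Hdel HNm H2m Hclose HA HA2.
  assert (Hwm := log_weight_pos gamma m).
  apply (sing_val_le _ _ _ (fun k j => Cconj (d k j)) unit_vec); [apply Rmult_le_pos; lra| |].
  - intros k _. split.
    + apply (l2_finite_support _ (k + N + 1)). intros j Hj. rewrite Hband by lia. apply Cconj_0.
    + apply (l2_finite_support _ (S k)). intros j Hj. unfold unit_vec.
      destruct (Nat.eq_dec j k); [lia|auto].
  - intros x Hx. replace (S m - 1)%nat with m by lia.
    set (y := vsub (band_apply N d x) (fin_rank_apply m (fun k j => Cconj (d k j)) unit_vec x)).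
    assert (Hy : forall i, Cmod (y i) ^ 2
                          = if (i <? m)%nat then 0 else Cmod (band_apply N d x i) ^ 2).
    { intros i. unfold y, vsub. rewrite fin_rank_first_rows.
      destruct (i <? m)%nat; [|f_equal; f_equal; ring]. 
      replace (Cminus _ _) with (RtoC 0) by ring. rewrite Cmod_0. ring. }
    assert (Hx0 : forall R, rsum (fun k => Cmod (x k) ^ 2) R <= Series (fun k => Cmod (x k) ^ 2))
      by (intros; apply rsum_le_Series; auto; intros; apply pow2_ge_0).
    assert (Hbracket : 0 <= (1 + eta) * Phi ^ 2 + (1 + / eta) * INR K ^ 2 * delta ^ 2).
    { pose proof (Rinv_0_lt_compat eta Heta).
      apply Rplus_le_le_0_compat; apply Rmult_le_pos; try apply pow2_ge_0; try lra.
      apply Rmult_le_pos; [lra|apply pow2_ge_0]. }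
    destruct (Series_le_of_rsum_le (fun i => Cmod (y i) ^ 2)
                ((log_weight gamma m * A) ^ 2 * Series (fun k => Cmod (x k) ^ 2)))
      as [Hex Hle].
    + intros; apply pow2_ge_0.
    + intros R. rewrite (rsum_ext _ _ _ (fun i _ => Hy i)), rsum_skip_initial.
      eapply Rle_trans; [apply (tail_energy_le Phi eta delta); auto|].
      rewrite Rpow_mult_distr. apply Rmult_le_compat; auto.
      * apply Rmult_le_pos; auto. apply pow2_ge_0.
      * apply rsum_nonneg. intros; apply pow2_ge_0.
      * apply Rmult_le_compat_l; auto. apply pow2_ge_0.
    + split; [exact Hex|]. apply l2norm_le_of_Series_le; auto. apply Rmult_le_pos; lra.
Qed.

End UpperBound.

(** * Lower bound: block plane waves *)

Definition block_wave (s P n : nat) (a : nat -> C) (th : R) (k : nat) : C :=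
  if andb (s <=? k)%nat (k <? s + n * P)%nat
  then Cmult (a ((k - s) / P)%nat) (cexpi (th * INR k)) else RtoC 0.

Section BlockWave.

Variables (s P n : nat) (th : R).
Hypothesis HP : (0 < P)%nat.

Lemma block_wave_block a l r : (l < n)%nat -> (r < P)%nat ->
  block_wave s P n a th (s + (l * P + r))%nat = Cmult (a l) (cexpi (th * INR (s + (l * P + r)))).
Proof.
  intros Hl Hr. unfold block_wave.
  replace (andb (s <=? s + (l * P + r))%nat (s + (l * P + r) <? s + n * P)%nat) with true.
  - replace ((s + (l * P + r) - s) / P)%nat with l; auto.
    replace (s + (l * P + r) - s)%nat with (r + l * P)%nat by lia.
    rewrite Nat.div_add, Nat.div_small by lia. lia.
  - symmetry. apply andb_true_intro. split; [apply Nat.leb_le; lia|apply Nat.ltb_lt; nia].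
Qed.

Lemma block_wave_before a k : (k < s)%nat -> block_wave s P n a th k = RtoC 0.
Proof.
  intros Hk. unfold block_wave. rewrite (proj2 (Nat.leb_gt s k) Hk). reflexivity.
Qed.

Lemma block_wave_after a k : (s + n * P <= k)%nat -> block_wave s P n a th k = RtoC 0.
Proof.
  intros Hk. unfold block_wave. rewrite (proj2 (Nat.ltb_ge k (s + n * P)) Hk).
  destruct (s <=? k)%nat; reflexivity.
Qed.

Lemma csum_block_wave a f :
  csum (fun k => f k (block_wave s P n a th k)) (s + n * P)
  = Cplus (csum (fun k => f k (RtoC 0)) s)
      (csum (fun l => csum (fun r => f (s + (l * P + r))%nat
               (Cmult (a l) (cexpi (th * INR (s + (l * P + r)))))) P) n).
Proof.
  rewrite csum_add, csum_block. f_equal.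
  - apply csum_ext. intros k Hk. rewrite block_wave_before; auto.
  - apply csum_ext. intros l Hl. apply csum_ext. intros r Hr. rewrite block_wave_block; auto.
Qed.

Lemma block_wave_energy a :
  l2 (block_wave s P n a th) /\
  Series (fun k => Cmod (block_wave s P n a th k) ^ 2) = INR P * rsum (fun l => Cmod (a l) ^ 2) n.
Proof.
  destruct (l2_finite_support _ (s + n * P) (block_wave_after a)) as [Hl2 ->]. split; auto.
  rewrite rsum_add, rsum_block.
  rewrite (rsum_ext (fun k => Cmod (block_wave s P n a th k) ^ 2) (fun _ => 0)), rsum_const.
  - rewrite Rmult_0_r, Rplus_0_l, <- rsum_scal. apply rsum_ext. intros l Hl.
    rewrite (rsum_ext _ (fun _ => Cmod (a l) ^ 2)), rsum_const; [ring|].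
    intros r Hr. rewrite block_wave_block, Cmod_mult, Cmod_cexpi by auto. ring.
  - intros k Hk. rewrite block_wave_before, Cmod_0 by auto. ring.
Qed.

Lemma block_wave_orthogonal (u : nat -> (nat -> C)) : (1 <= n)%nat ->
  exists a, (exists l, (l < n)%nat /\ a l <> RtoC 0) /\
    forall k, (k < n - 1)%nat -> ip (block_wave s P n a th) (u k) = RtoC 0.
Proof.
  intros Hn.
  set (coef := fun k l => csum (fun r => Cmult (cexpi (th * INR (s + (l * P + r))))
                                              (Cconj (u k (s + (l * P + r))%nat))) P).
  destruct (homogeneous_system_nontrivial_solution n (n - 1) coef ltac:(lia)) as [a [Ha Hker]].
  exists a. split; auto. intros k Hk.
  rewrite (ip_finite_support _ _ (s + n * P))
    by (intros i Hi; rewrite block_wave_after by auto; ring).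
  rewrite (csum_block_wave a (fun i z => Cmult z (Cconj (u k i)))), csum_zero by (intros; ring).
  rewrite Cplus_0_l, <- (Hker k Hk). apply csum_ext. intros l Hl.
  unfold coef. rewrite <- csum_scal_r. apply csum_ext. intros; ring.
Qed.

End BlockWave.

Section LowerBound.

Variables (gamma : R) (N : nat) (b : Z -> C) (d : nat -> nat -> C).
Hypothesis (Hgamma : 0 <= gamma) (Hband : banded N d).

Let K := (2 * N + 1)%nat.
Let beta := symbol_coef N b.

Lemma row_symbol_ge delta th i : row_close gamma N b d delta i ->
  log_weight gamma i * (Cmod (trig_poly beta K th) - INR K * delta)
  <= Cmod (csum (fun q => Cmult (d i (i - N + q)%nat) (cexpi (INR q * th))) K).
Proof.
  intros Hclose. set (wi := log_weight gamma i).
  assert (Hwi : 0 < wi) by apply log_weight_pos.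
  set (Er := csum (fun q => Cmult (Cminus (d i (i - N + q)%nat) (Cmult (beta q) (RtoC wi)))
                                  (cexpi (INR q * th))) K).
  replace (csum _ K) with (Cplus (Cmult (RtoC wi) (trig_poly beta K th)) Er).
  2:{ unfold Er, trig_poly. rewrite <- csum_scal_l, <- csum_plus. apply csum_ext. intros; ring. }
  assert (HEr : Cmod Er <= INR K * (delta * wi)).
  { eapply Rle_trans; [apply Cmod_csum|]. rewrite <- rsum_const. apply rsum_le. intros q Hq.
    rewrite Cmod_mult, Cmod_cexpi, Rmult_1_r. apply Hclose. unfold K in Hq; lia. }
  eapply Rle_trans; [|apply Cmod_reverse_triangle].
  rewrite Cmod_mult, Cmod_R, Rabs_pos_eq by lra. lra.
Qed.

Lemma block_wave_interior_row_ge th delta P s n a l r :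
  (N <= s)%nat -> (2 <= s)%nat -> (forall i, (s <= i)%nat -> row_close gamma N b d delta i) ->
  (l < n)%nat -> (r + 2 * N < P)%nat ->
  0 <= Cmod (trig_poly beta K th) - INR K * delta ->
  Cmod (a l) * log_weight gamma (s + n * P) * (Cmod (trig_poly beta K th) - INR K * delta)
  <= Cmod (band_apply N d (block_wave s P n a th) (s + (l * P + (N + r)))).
Proof.
  intros HNs H2s Hclose Hl Hr Hrho.
  set (i := (s + (l * P + (N + r)))%nat).
  rewrite band_apply_window by (auto; unfold i; lia).
  replace (csum _ (2 * N + 1)) with
    (Cmult (Cmult (a l) (cexpi (th * INR (i - N))))
           (csum (fun q => Cmult (d i (i - N + q)%nat) (cexpi (INR q * th))) K)).
  2:{ rewrite <- csum_scal_l. apply csum_ext. intros q Hq.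
      replace (i - N + q)%nat with (s + (l * P + (r + q)))%nat by (unfold i; lia).
      rewrite block_wave_block by (unfold K in Hq; lia).
      replace (s + (l * P + (r + q)))%nat with (i - N + q)%nat by (unfold i; lia).
      rewrite plus_INR, Rmult_plus_distr_l, (Rmult_comm th (INR q)), <- cexpi_add. ring. }
  rewrite !Cmod_mult, Cmod_cexpi, Rmult_1_r, Rmult_assoc.
  apply Rmult_le_compat_l; [apply Cmod_ge_0|].
  eapply Rle_trans; [|apply row_symbol_ge, Hclose; unfold i; lia].
  apply Rmult_le_compat_r; auto. apply log_weight_antitone; auto; unfold i; nia.
Qed.

Lemma block_wave_image_energy th delta P s n a :
  (N <= s)%nat -> (2 <= s)%nat -> (forall i, (s <= i)%nat -> row_close gamma N b d delta i) ->
  (2 * N < P)%nat -> 0 <= Cmod (trig_poly beta K th) - INR K * delta ->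
  l2 (band_apply N d (block_wave s P n a th)) ->
  INR (P - 2 * N)
    * (log_weight gamma (s + n * P) * (Cmod (trig_poly beta K th) - INR K * delta)) ^ 2
    * rsum (fun l => Cmod (a l) ^ 2) n
  <= Series (fun i => Cmod (band_apply N d (block_wave s P n a th) i) ^ 2).
Proof.
  intros HNs H2s Hclose HP Hrho Hl2.
  set (rho := Cmod (trig_poly beta K th) - INR K * delta) in *.
  set (w := log_weight gamma (s + n * P)).
  set (f := fun i => Cmod (band_apply N d (block_wave s P n a th) i) ^ 2).
  assert (Hf : forall i, 0 <= f i) by (intros; apply pow2_ge_0).
  eapply Rle_trans; [|apply (rsum_le_Series f (s + n * P) Hf Hl2)].
  eapply Rle_trans; [|apply rsum_shift_le; auto].
  rewrite rsum_block, <- rsum_scal. apply rsum_le. intros l Hl.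
  eapply Rle_trans; [|apply (rsum_mono _ (N + (P - 2 * N))); [intros; apply Hf|lia]].
  eapply Rle_trans; [|apply (rsum_shift_le (fun r => f (s + (l * P + r))%nat)); intros; apply Hf].
  rewrite Rmult_assoc, <- rsum_const.
  apply rsum_le. intros r Hr. unfold f.
  replace ((w * rho) ^ 2 * Cmod (a l) ^ 2) with ((Cmod (a l) * w * rho) ^ 2) by ring.
  apply pow_incr. split.
  - apply Rmult_le_pos; auto. apply Rmult_le_pos; [apply Cmod_ge_0|apply Rlt_le, log_weight_pos].
  - apply block_wave_interior_row_ge; auto; lia.
Qed.

Lemma sing_val_lower th delta c P s n :
  bounded_op (band_apply N d) -> (N <= s)%nat -> (2 <= s)%nat -> (1 <= n)%nat ->
  (forall i, (s <= i)%nat -> row_close gamma N b d delta i) ->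
  (2 * N < P)%nat -> 0 <= c -> c ^ 2 * INR P <= INR (P - 2 * N) ->
  0 <= Cmod (trig_poly beta K th) - INR K * delta ->
  log_weight gamma (s + n * P) * (Cmod (trig_poly beta K th) - INR K * delta) * c
  <= sing_val (band_apply N d) n.
Proof.
  intros Hbnd HNs H2s Hn Hclose HP Hc HcP Hrho.
  set (rho := Cmod (trig_poly beta K th) - INR K * delta) in *.
  set (w := log_weight gamma (s + n * P)).
  assert (Hw : 0 < w) by apply log_weight_pos.
  assert (HPr : 0 < INR P) by (apply lt_0_INR; lia).
  apply sing_val_ge; auto. intros u v _.
  destruct (block_wave_orthogonal s P n th ltac:(lia) u Hn) as [a [[l0 [Hl0 Ha0]] Hperp]].
  set (x := block_wave s P n a th).
  destruct (block_wave_energy s P n th ltac:(lia) a) as [Hx HSx]. fold x in Hx, HSx.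
  set (SA := rsum (fun l => Cmod (a l) ^ 2) n) in HSx.
  assert (HSA : 0 < SA).
  { eapply Rlt_le_trans; [|apply (rsum_ge_term (fun l => Cmod (a l) ^ 2) n l0); auto].
    - apply pow_lt, Cmod_gt_0. auto.
    - intros; apply pow2_ge_0. }
  destruct Hbnd as [Mb HMb]. destruct (HMb x Hx) as [HDx _].
  exists x. repeat split; auto.
  - unfold l2norm. rewrite HSx. apply sqrt_lt_R0, Rmult_lt_0_compat; auto.
  - intros i. unfold fin_rank_apply. apply csum_zero. intros k Hk. rewrite Hperp by auto. ring.
  - unfold l2norm. rewrite HSx. apply scaled_sqrt_le.
    + apply Rmult_le_pos; auto. apply Rmult_le_pos; lra.
    + apply Rmult_le_pos; lra.
    + eapply Rle_trans; [|apply (block_wave_image_energy th delta); auto].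
      fold rho w SA. rewrite !Rpow_mult_distr.
      replace ((w ^ 2 * rho ^ 2) * c ^ 2 * (INR P * SA))
        with ((c ^ 2 * INR P) * (w ^ 2 * rho ^ 2 * SA)) by ring.
      replace (INR (P - 2 * N) * (w ^ 2 * rho ^ 2) * SA)
        with (INR (P - 2 * N) * (w ^ 2 * rho ^ 2 * SA)) by ring.
      apply Rmult_le_compat_r; auto.
      apply Rmult_le_pos; [|lra]. apply Rmult_le_pos; apply pow2_ge_0.
Qed.

End LowerBound.

(** * Asymptotics *)

Lemma INR_unbounded r : exists n : nat, r < INR n.
Proof.
  destruct (archimed (Rabs r)) as [Hup _].
  assert (Hpos : 0 < IZR (up (Rabs r))) by (pose proof (Rabs_pos r); lra).
  apply lt_0_IZR in Hpos. exists (Z.to_nat (up (Rabs r))).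
  rewrite INR_IZR_INZ, Z2Nat.id by lia. pose proof (Rle_abs r). lra.
Qed.

Lemma ln_INR_eventually_ge k B : eventually (fun n => B <= ln (INR (n - k))).
Proof.
  destruct (INR_unbounded (exp B)) as [n0 Hn0]. exists (n0 + k)%nat. intros n Hn.
  rewrite <- (ln_exp B). apply ln_le; [apply exp_pos|].
  apply Rlt_le. eapply Rlt_le_trans; [exact Hn0|]. apply le_INR. lia.
Qed.

(* [ln p <= ln q + a <= lam ln q] once [ln q] is large, where [lam ^ gamma = 1 + xi]. *)
Lemma Rpower_ln_eventually_le gamma xi a (p q : nat -> R) : 0 < gamma -> 0 < xi ->
  eventually (fun n => 1 < p n) -> (forall B, eventually (fun n => B <= ln (q n))) ->
  eventually (fun n => ln (p n) <= ln (q n) + a) ->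
  eventually (fun n => Rpower (ln (p n)) gamma <= (1 + xi) * Rpower (ln (q n)) gamma).
Proof.
  intros Hg Hxi [N2 Hp] Hq [N3 Hpq].
  set (lam := Rpower (1 + xi) (/ gamma)).
  assert (Hlam : 1 < lam).
  { pose proof (Rpower_lt (1 + xi) 0 (/ gamma) ltac:(lra) (Rinv_0_lt_compat _ Hg)) as X.
    rewrite Rpower_O in X by lra. exact X. }
  assert (Hlg : Rpower lam gamma = 1 + xi).
  { unfold lam. rewrite Rpower_mult, Rinv_l by lra. apply Rpower_1. lra. }
  destruct (Hq (Rmax 1 (a / (lam - 1)))) as [N1 HN1].
  exists (Nat.max N1 (Nat.max N2 N3)). intros n Hn.
  specialize (HN1 n ltac:(lia)). specialize (Hp n ltac:(lia)). specialize (Hpq n ltac:(lia)).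
  set (Lq := ln (q n)) in *.
  assert (HLq1 : 1 <= Lq) by (eapply Rle_trans; [apply Rmax_l|exact HN1]).
  assert (Ha : a <= (lam - 1) * Lq).
  { assert (HLa : a / (lam - 1) <= Lq) by (eapply Rle_trans; [apply Rmax_r|exact HN1]).
    apply Rmult_le_compat_l with (r := lam - 1) in HLa; [|lra].
    replace ((lam - 1) * (a / (lam - 1))) with a in HLa by (field; lra). lra. }
  assert (Hlp : 0 < ln (p n)) by (rewrite <- ln_1; apply ln_increasing; lra).
  eapply Rle_trans.
  - apply Rle_Rpower_l; [lra|]. split; [exact Hlp|]. instantiate (1 := lam * Lq). nra.
  - rewrite <- Rpower_mult_distr, Hlg by lra. lra.
Qed.

Lemma upper_parameters Phi e K : 0 <= Phi -> 0 < e -> 1 <= K ->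
  exists eta delta, 0 < eta /\ 0 < delta /\
    (1 + eta) * Phi ^ 2 + (1 + / eta) * K ^ 2 * delta ^ 2 <= (Phi + e / 2) ^ 2.
Proof.
  intros HP He HK.
  set (eta := e / (4 * (Phi + 1))).
  assert (Heta : 0 < eta) by (apply Rdiv_lt_0_compat; lra).
  exists eta, (e * eta / (2 * K * (1 + eta))).
  split; [auto|split; [apply Rdiv_lt_0_compat; nra|]].
  replace ((1 + / eta) * K ^ 2 * (e * eta / (2 * K * (1 + eta))) ^ 2)
    with (e ^ 2 * eta / (4 * (1 + eta))) by (field; lra).
  assert (E2 : eta * Phi ^ 2 <= e * Phi / 4).
  { apply (Rmult_le_reg_r (4 * (Phi + 1))); [lra|].
    unfold eta. field_simplify; [|lra]. nra. }
  assert (E3 : e ^ 2 * eta / (4 * (1 + eta)) <= e ^ 2 / 4).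
  { apply (Rmult_le_reg_r (4 * (1 + eta))); [lra|].
    field_simplify; [|lra]. nra. }
  nra.
Qed.

Lemma sing_val_eventually_le gamma N b d Phi e :
  0 < gamma -> banded N d -> bounded_op (band_apply N d) -> diag_asymptotics gamma N b d ->
  (forall th, Cmod (trig_poly (symbol_coef N b) (2 * N + 1) th) <= Phi) -> 0 <= Phi -> 0 < e ->
  eventually (fun n => Rpower (ln (INR n)) gamma * sing_val (band_apply N d) n <= Phi + e).
Proof.
  intros Hg Hb Hbnd Has HPhi HPhi0 He.
  assert (HK : 1 <= INR (2 * N + 1)) by (apply (le_INR 1); lia).
  destruct (upper_parameters Phi e _ HPhi0 He HK) as [eta [delta [Heta [Hdel Hbr]]]].
  set (A := Phi + e / 2) in Hbr.
  destruct (row_close_eventually gamma N b d delta Has Hdel) as [M0 HM0].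
  set (xi := (e / 2) / A).
  assert (Hxi : 0 < xi) by (unfold xi, A; apply Rdiv_lt_0_compat; lra).
  destruct (Rpower_ln_eventually_le gamma xi (ln 2) INR (fun n => INR (n - 1)) Hg Hxi)
    as [N1 HN1].
  - exists 2%nat. intros n Hn. apply (lt_INR 1 n). lia.
  - intros B. apply ln_INR_eventually_ge.
  - exists 2%nat. intros n Hn. rewrite <- ln_mult.
    + apply ln_le; [apply (lt_INR 0); lia|].
      rewrite minus_INR by lia. assert (2 <= INR n) by (apply (le_INR 2); lia). simpl. lra.
    + rewrite minus_INR by lia. assert (2 <= INR n) by (apply (le_INR 2); lia). simpl. lra.
    + lra.
  - exists (Nat.max N1 (Nat.max (S M0) (Nat.max (S N) 3))). intros n Hn.
    specialize (HN1 n ltac:(lia)). destruct n as [|m]; [lia|].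
    replace (S m - 1)%nat with m in HN1 by lia.
    assert (Hs : sing_val (band_apply N d) (S m) <= log_weight gamma m * A).
    { apply (sing_val_upper gamma N b d (Rlt_le _ _ Hg) Hb Phi eta delta); auto; try lia; try lra.
      - intros i Hi. apply HM0. lia.
      - unfold A; lra. }
    assert (HR := exp_pos (gamma * ln (ln (INR (S m))))).
    fold (Rpower (ln (INR (S m))) gamma) in HR.
    assert (Hw := log_weight_pos gamma m).
    apply Rle_trans with ((1 + xi) * Rpower (ln (INR m)) gamma * (log_weight gamma m * A)).
    + eapply Rle_trans; [apply Rmult_le_compat_l; [lra|exact Hs]|].
      apply Rmult_le_compat_r; [apply Rmult_le_pos; unfold A; lra|exact HN1].
    + rewrite Rmult_assoc, <- (Rmult_assoc (Rpower _ _)), Rpower_ln_log_weight.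
      unfold xi, A. right. field. lra.
Qed.

Lemma block_length_exists N c : 0 <= c < 1 ->
  exists P : nat, (2 * N < P)%nat /\ c ^ 2 * INR P <= INR (P - 2 * N).
Proof.
  intros Hc. assert (Hc2 : 0 < 1 - c ^ 2) by nra.
  assert (HN := pos_INR N).
  destruct (INR_unbounded (2 * INR N / (1 - c ^ 2) + 2 * INR N)) as [P HP].
  assert (H0 : 0 <= 2 * INR N / (1 - c ^ 2)) by (apply Rdiv_le_0_compat; lra).
  assert (HPN : (2 * N < P)%nat) by (apply INR_lt; rewrite mult_INR; simpl; lra).
  exists P. split; auto.
  rewrite minus_INR, mult_INR by lia. simpl.
  assert (Hlt : 2 * INR N / (1 - c ^ 2) <= INR P) by lra.
  apply (Rmult_le_compat_r (1 - c ^ 2)) in Hlt; [|lra].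
  replace (2 * INR N / (1 - c ^ 2) * (1 - c ^ 2)) with (2 * INR N) in Hlt by (field; lra).
  lra.
Qed.

Lemma sing_val_eventually_ge gamma N b d Phi e th :
  0 < gamma -> banded N d -> bounded_op (band_apply N d) -> diag_asymptotics gamma N b d ->
  0 < e -> Phi - e / 2 < Cmod (trig_poly (symbol_coef N b) (2 * N + 1) th) ->
  eventually (fun n => Phi - e <= Rpower (ln (INR n)) gamma * sing_val (band_apply N d) n).
Proof.
  intros Hg Hb Hbnd Has He Hth.
  set (K := INR (2 * N + 1)).
  assert (HK : 1 <= K) by (apply (le_INR 1); lia).
  set (delta := e / (4 * K)).
  assert (Hdel : 0 < delta) by (apply Rdiv_lt_0_compat; lra).
  set (rho := Cmod (trig_poly (symbol_coef N b) (2 * N + 1) th) - K * delta).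
  assert (Hrho : Phi - 3 * e / 4 < rho) by (unfold rho, delta; field_simplify; lra).
  assert (Hf0 : forall n, 0 <= Rpower (ln (INR n)) gamma * sing_val (band_apply N d) n)
    by (intros; apply Rmult_le_pos; [apply Rlt_le, exp_pos|apply sing_val_nonneg]).
  destruct (Rlt_le_dec rho 0) as [Hneg|Hpos].
  { exists 0%nat. intros n _. specialize (Hf0 n). lra. }
  set (xi := e / (8 * (rho + 1))).
  assert (Hxi : 0 < xi) by (apply Rdiv_lt_0_compat; lra).
  set (c := / (1 + xi)).
  assert (Hc : 0 < c < 1).
  { split; [apply Rinv_0_lt_compat; lra|]. rewrite <- Rinv_1. apply Rinv_lt_contravar; lra. }
  destruct (block_length_exists N c ltac:(lra)) as [P [HPN HcP]].
  destruct (row_close_eventually gamma N b d delta Has Hdel) as [M0 HM0].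
  set (s := Nat.max M0 (Nat.max N 2)).
  destruct (Rpower_ln_eventually_le gamma xi (ln (INR (s + P)))
              (fun n => INR (s + n * P)) INR Hg Hxi) as [N1 HN1].
  - exists 0%nat. intros n _. apply (lt_INR 1). unfold s. lia.
  - intros B. destruct (ln_INR_eventually_ge 0 B) as [N2 HN2]. exists N2. intros n Hn.
    specialize (HN2 n Hn). rewrite Nat.sub_0_r in HN2. auto.
  - exists 1%nat. intros n Hn. rewrite Rplus_comm, <- ln_mult.
    + apply ln_le; [apply (lt_INR 0); unfold s; lia|].
      rewrite <- mult_INR. apply le_INR. unfold s in *. nia.
    + apply (lt_INR 0); unfold s; lia.
    + apply (lt_INR 0); lia.
  - exists (Nat.max N1 1). intros n Hn. specialize (HN1 n ltac:(lia)). simpl in HN1.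
    assert (Hsv := sing_val_lower gamma N b d (Rlt_le _ _ Hg) Hb th delta c P s n Hbnd
                     ltac:(unfold s; lia) ltac:(unfold s; lia) ltac:(lia)
                     ltac:(intros i Hi; apply HM0; unfold s in Hi; lia) HPN
                     ltac:(lra) HcP Hpos).
    fold K rho in Hsv.
    set (w := log_weight gamma (s + n * P)) in Hsv.
    set (Rn := Rpower (ln (INR n)) gamma) in *.
    assert (HRn : 0 < Rn) by apply exp_pos.
    assert (Hratio : c <= Rn * w).
    { unfold w, log_weight, c. assert (HR2 := exp_pos (gamma * ln (ln (INR (s + n * P))))).
      fold (Rpower (ln (INR (s + n * P))) gamma) in HR2.
      apply (Rmult_le_reg_r ((1 + xi) * Rpower (ln (INR (s + n * P))) gamma)); [nra|].
      field_simplify; lra. }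
    assert (Hc2 : 1 - 2 * xi <= c ^ 2).
    { unfold c. rewrite pow_inv.
      apply (Rmult_le_reg_r ((1 + xi) ^ 2)); [nra|]. field_simplify; nra. }
    assert (Hxirho : 2 * xi * rho <= e / 4).
    { unfold xi. apply (Rmult_le_reg_r (8 * (rho + 1))); [lra|]. field_simplify; nra. }
    apply Rle_trans with (Rn * (w * rho * c)); [|apply Rmult_le_compat_l; lra].
    apply Rle_trans with (c * rho * c); [nra|].
    replace (Rn * (w * rho * c)) with ((Rn * w) * rho * c) by ring.
    apply Rmult_le_compat_r; [lra|]. apply Rmult_le_compat_r; lra.
Qed.

Theorem corollary4p4 (gamma : R) (N : nat) (b : Z -> C) (d : nat -> nat -> C) :
  0 < gamma ->
  (forall i j : nat, (i + N < j)%nat \/ (j + N < i)%nat -> d i j = RtoC 0) ->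
  compact_op (band_apply N d) ->
  (forall j : Z, (- Z.of_nat N <= j <= Z.of_nat N)%Z ->
     exists eps : nat -> C,
       is_lim_seq (fun m => Cmod (eps m)) 0 /\
       exists m0 : nat, forall m : nat, (m0 <= m)%nat ->
         d m (Z.to_nat (Z.of_nat m + j)) =
         Cmult (Cdiv (b j) (RtoC (Rpower (ln (INR m)) gamma)))
               (Cplus (RtoC 1) (eps m))) ->
  is_lim_seq (fun n => Rpower (ln (INR n)) gamma * sing_val (band_apply N d) n)
             (symbol_sup_norm N b).
Proof.
  intros Hg Hb [Hbnd _] Has.
  destruct (symbol_sup_norm_spec N b) as [Hsup Happrox].
  assert (HPhi0 : 0 <= symbol_sup_norm N b) by (eapply Rle_trans; [apply Cmod_ge_0|apply (Hsup 0)]).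
  apply is_lim_seq_spec. intros [e He]. simpl.
  destruct (Happrox (e / 4) ltac:(lra)) as [th Hth].
  destruct (sing_val_eventually_le gamma N b d _ (e / 2) Hg Hb Hbnd Has Hsup HPhi0 ltac:(lra))
    as [Nu HNu].
  destruct (sing_val_eventually_ge gamma N b d (symbol_sup_norm N b) (e / 2) th
              Hg Hb Hbnd Has ltac:(lra) ltac:(lra))
    as [Nl HNl].
  exists (Nat.max Nu Nl). intros n Hn.
  specialize (HNu n ltac:(lia)). specialize (HNl n ltac:(lia)).
  apply Rabs_lt_between'. lra.
Qed.
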